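(* Let $(\mathcal{T},\mathcal{F},\mathcal{S})$ be a tree of fusion systems satisfying $(H)$, with completion $\mathcal{F}_\mathcal{T}$ on $S:=\mathcal{S}(v_* )$, and fix $P\le S$. Then: (a) The connected component of the vertex $[\iota_P^S]_{\mathcal{F}(v_* )}$ in the $P$-orbit graph $\operatorname{Rep}(P,\mathcal{F})$ is equal to (isomorphic to) the subgraph $\operatorname{Rep}_{\mathcal{F}_\mathcal{T}}(P,\mathcal{F})$. (b) The map $\Phi_P:\pi_0(\operatorname{Rep}(P,\mathcal{F}))\to\operatorname{Rep}(P,\mathcal{F}_\mathcal{T})$ sending the connected component of a vertex $[\alpha]_{\mathcal{F}(v)}$ to $[\alpha\circ\iota_{\mathcal{S}(v)}^S]_{\mathcal{F}_\mathcal{T}}$ is a well-defined bijection.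
   Context: Conventions: homomorphisms act on the right, $\alpha\circ\beta$ means first $\alpha$ then $\beta$, $\iota$ denotes inclusions. Fusion systems, morphisms of fusion systems, trees of fusion systems $(\mathcal{T},\mathcal{F},\mathcal{S})$ (finite tree $\mathcal{T}$; finite $p$-groups $\mathcal{S}(v),\mathcal{S}(e)$ with monomorphisms $\mathcal{S}(f_{ev}):\mathcal{S}(e)\to\mathcal{S}(v)$ for $v$ incident on $e$; fusion systems $\mathcal{F}(v)$ on $\mathcal{S}(v)$, $\mathcal{F}(e)$ on $\mathcal{S}(e)$ with $\mathcal{S}(f_{ev})$ an injective morphism of fusion systems) are as usual. Hypothesis $(H)$: there is a vertex $v_*$ such that for every vertex $v\neq v_*$, the edge $e$ incident on $v$ on the minimal path from $v$ to $v_*$ has $\mathcal{S}(f_{ev})$ an isomorphism. Under $(H)$ all $\mathcal{S}(v),\mathcal{S}(e)$ are identified with subgroups of $S=\mathcal{S}(v_* )$ so that the $\mathcal{S}(f_{ev})$ are inclusions, and the completion is $\mathcal{F}_\mathcal{T}:=\langle\operatorname{Hom}_{\mathcal{F}(v)}(Q,\mathcal{S}(v))\mid Q\le\mathcal{S}(v), v\in V(\mathcal{T})\rangle_S$, the smallest fusion system on $S$ containing all $\mathcal{F}(v)$. For a fusion system $\mathcal{K}$ on $T$ and a $p$-group $P$, define $\alpha\sim\beta$ on $\operatorname{Hom}(P,T)$ iff there is $\gamma\in\operatorname{Iso}_\mathcal{K}(P\alpha,P\beta)$ with $\alpha\circ\gamma=\beta$; $\operatorname{Rep}(P,\mathcal{K}):=\operatorname{Hom}(P,T)/\!\sim$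 with classes $[\alpha]_\mathcal{K}$; if $\hat{\mathcal{K}}\supseteq\mathcal{K}$ is a fusion system, $\operatorname{Rep}_{\hat{\mathcal{K}}}(P,\mathcal{K}):=\operatorname{Hom}_{\hat{\mathcal{K}}}(P,T)/\!\sim$. The $P$-orbit graph $\operatorname{Rep}(P,\mathcal{F})$ has vertex set the disjoint union over $v\in V(\mathcal{T})$ of $\operatorname{Rep}(P,\mathcal{F}(v))$ and edge set the disjoint union over $e\in E(\mathcal{T})$ of $\operatorname{Rep}(P,\mathcal{F}(e))$; an edge $[\gamma]_{\mathcal{F}(e)}$ with $e=(v,w)$ joins $[\gamma\circ\iota_{\mathcal{S}(e)}^{\mathcal{S}(v)}]_{\mathcal{F}(v)}$ and $[\gamma\circ\iota_{\mathcal{S}(e)}^{\mathcal{S}(w)}]_{\mathcal{F}(w)}$. For $P\le S$ under $(H)$, $\operatorname{Rep}_{\mathcal{F}_\mathcal{T}}(P,\mathcal{F})$ is the subgraph with vertices $\operatorname{Rep}_{\mathcal{F}_\mathcal{T}}(P,\mathcal{F}(v))$ and edges $\operatorname{Rep}_{\mathcal{F}_\mathcal{T}}(P,\mathcal{F}(e))$ (classes of morphisms lying in $\mathcal{F}_\mathcal{T}$). *)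

From Stdlib Require Import Relations.
From HB Require Import structures.
From mathcomp Require Import all_boot all_order all_fingroup all_solvable.
Set Implicit Arguments. Unset Strict Implicit. Unset Printing Implicit Defensive.

Local Open Scope group_scope.

Section Fusion.
Variable gT : finGroupType.

(* Maps are plain functions gT -> gT acting on a source subgroup; only their
   values on the source matter (fusion systems are required to be
   extensional).  Composition "first f then g" is  fun x => g (f x). *)

Definition grp_hom (P T : {set gT}) (a : gT -> gT) : Prop :=
  {in P &, {morph a : x y / x * y}} /\ a @: P \subset T.

(* A (candidate) fusion system: F P f  means  f in Hom_F(P, S), i.e. f is a
   morphism of F with source P (codomain = any subgroup containing f(P)). *)
Definition fusion_pred := {set gT} -> (gT -> gT) -> Prop.

(* Fusion system on S (in the usual sense, not necessarily saturated). *)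
Record is_fusion (S : {set gT}) (F : fusion_pred) : Prop := {
  fus_mor : forall P f, F P f ->
     [/\ group_set P, P \subset S, {in P &, {morph f : x y / x * y}},
         {in P &, injective f} & f @: P \subset S];
  fus_ext : forall P f g, F P f -> {in P, f =1 g} -> F P g;
  fus_conj : forall P s, group_set P -> P \subset S -> s \in S ->
     F P (fun x => x ^ s);
  fus_res : forall P Q f, F P f -> group_set Q -> Q \subset P -> F Q f;
  fus_comp : forall P f g, F P f -> F (f @: P) g -> F P (fun x => g (f x));
  fus_inv : forall P f, F P f ->
     exists g, F (f @: P) g /\ {in P, forall x, g (f x) = x}
}.

Definition rep_equiv (K : fusion_pred) (T P : {set gT}) (a b : gT -> gT)
  : Prop :=
  grp_hom P T a /\ grp_hom P T b /\
  exists c, K (a @: P) c /\ c @: (a @: P) = b @: P /\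
            {in P, forall x, c (a x) = b x}.

End Fusion.

Section Trees.
Variables V E : finType.
Variables src tgt : E -> V.

Definition tree_adj (A : pred E) : rel V := fun v w =>
  [exists e, A e && (((src e == v) && (tgt e == w)) ||
                     ((src e == w) && (tgt e == v)))].

Definition is_tree : Prop :=
  (forall v w, connect (tree_adj predT) v w) /\ #|E|.+1 = #|V|.
End Trees.

(* A tree of fusion systems, already in the form given by (H): all the
   groups S(v), S(e) are subgroups of one finite group, and the maps
   S(f_ev) are inclusions. *)
Record fus_tree (gT : finGroupType) (V E : finType) := FusTree {
  ft_src : E -> V;
  ft_tgt : E -> V;
  ft_vstar : V;
  ft_Sv : V -> {group gT};
  ft_Se : E -> {group gT};
  ft_Fv : V -> fusion_pred gT;
  ft_Fe : E -> fusion_pred gT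
}.

Section TreeOfFusion.
Variables (gT : finGroupType) (V E : finType) (T : fus_tree gT V E).

Local Notation src := (ft_src T).
Local Notation tgt := (ft_tgt T).
Local Notation vstar := (ft_vstar T).
Local Notation Sv := (ft_Sv T).
Local Notation Se := (ft_Se T).
Local Notation Fv := (ft_Fv T).
Local Notation Fe := (ft_Fe T).

Definition ft_S : {group gT} := Sv vstar.

Definition is_fusion_tree (p : nat) : Prop :=
  [/\ is_tree src tgt,
      prime p /\ p.-group ft_S,
      (forall v, Sv v \subset ft_S)
        /\ (forall e, Se e \subset Sv (src e) /\ Se e \subset Sv (tgt e)),
      (forall v, is_fusion (Sv v) (Fv v)) /\ (forall e, is_fusion (Se e) (Fe e))
    & forall e Q f, Fe e Q f -> Fv (src e) Q f /\ Fv (tgt e) Q f].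

(* Hypothesis (H): for v <> v_*, the edge e incident on v lying on the minimal
   path from v to v_* (i.e. whose removal disconnects v from v_* ) has
   S(f_ev) an isomorphism, i.e. S(e) = S(v). *)
Definition hypH : Prop :=
  forall v e, v != vstar -> (src e == v) || (tgt e == v) ->
    ~~ connect (tree_adj src tgt (predC1 e)) v vstar ->
    Se e = Sv v :> {set gT}.

Definition completion : fusion_pred gT := fun P f =>
  forall G : fusion_pred gT, is_fusion ft_S G ->
    (forall v Q g, Fv v Q g -> G Q g) -> G P f.

(* The P-orbit graph Rep(P, F): a vertex [a]_{F(v)} is represented by a
   pair (v, a) with a in Hom(P, S(v)).  Two representatives are joined by a
   step if they represent the same vertex, or are the two endpoints of an
   edge [c]_{F(e)}, c in Hom(P, S(e)). *)
Definition orbit_step (P : {set gT}) (x y : V * (gT -> gT)) : Prop :=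
  (x.1 = y.1 /\ rep_equiv (Fv x.1) (Sv x.1) P x.2 y.2) \/
  exists e c, grp_hom P (Se e) c /\
    ((src e = x.1 /\ tgt e = y.1) \/ (src e = y.1 /\ tgt e = x.1)) /\
    rep_equiv (Fv x.1) (Sv x.1) P c x.2 /\
    rep_equiv (Fv y.1) (Sv y.1) P c y.2.

Definition orbit_conn (P : {set gT}) : relation (V * (gT -> gT)) :=
  clos_refl_sym_trans _ (orbit_step P).

End TreeOfFusion.

From Stdlib Require Import Relations.
From mathcomp Require Import all_boot all_order all_fingroup all_solvable.
Set Implicit Arguments. Unset Strict Implicit. Unset Printing Implicit Defensive.

(* Write [[a]_v] for the vertex of Rep(P, F) represented by (v, a) and ~ for
   F_T-equivalence of maps P -> S.  The proof has three ingredients.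
   1. Tree induction: in a finite tree every edge is a bridge (a connected
      graph on #|V| vertices has at least #|V| - 1 edges), so one may induct
      from the root v_* outwards along the separating edges of (H).
   2. With (H) this shows that for Q <= S(v) the inclusion [id]_{v_*} is
      joined to [id]_v in Rep(Q, F); precomposing with a : P -> S(v) joins
      [a]_{v_*} to [a]_v.
   3. The morphisms f : Q -> S with [f]_{v_*} in the component of [id]_{v_*}
      form a fusion system on S containing every F(v), hence containing F_T.
   Conversely every edge of Rep(P, F) relates F_T-equivalent maps.  So two
   vertices are connected iff their images in Hom(P, S) are F_T-equivalent,
   which gives (b) and, applied to the vertex [id]_{v_*}, part (a). *)

Section TreeInduction.
Variables (V E : finType) (src tgt : E -> V).
Local Notation adj := (tree_adj src tgt).

Definition joins (e : E) (v w : V) : Prop :=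
  (src e = v /\ tgt e = w) \/ (src e = w /\ tgt e = v).

Lemma joins_ends (e : E) : joins e (src e) (tgt e).
Proof. by left. Qed.

Lemma adj_sym (A : pred E) : symmetric (adj A).
Proof. by move=> x y; apply: eq_existsb => f; rewrite orbC. Qed.

Lemma adjP (A : pred E) v w : reflect (exists2 e, A e & joins e v w) (adj A v w).
Proof.
apply: (iffP existsP) => [[e /andP[Ae /orP[]/andP[/eqP<- /eqP<-]]]|[e Ae h]].
- by exists e => //; left.
- by exists e => //; right.
by exists e; rewrite Ae; case: h => -[-> ->]; rewrite !eqxx ?orbT.
Qed.

Fixpoint ball (A : pred E) (r : V) (n : nat) (v : V) : bool :=
  if n is m.+1 then ball A r m v || [exists w, adj A v w && ball A r m w]
  else v == r.

Lemma ballS (A : pred E) r n v : ball A r n v -> ball A r n.+1 v.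
Proof. by move=> h; rewrite /= h. Qed.

Lemma ball_adj (A : pred E) r n v w : adj A v w -> ball A r n w -> ball A r n.+1 v.
Proof. by move=> avw hw; apply/orP; right; apply/existsP; exists w; rewrite avw. Qed.

Lemma connect_ball (A : pred E) r v : connect (adj A) v r -> exists n, ball A r n v.
Proof.
case/connectP=> pth; elim: pth v => [|w pth IH] v /=.
  by move=> _ eq_vr; exists 0; rewrite /= eq_vr.
case/andP=> avw pw lst; have [n hn] := IH w pw lst.
by exists n.+1; apply: ball_adj hn.
Qed.

Lemma ball_avoid r n v e : ball predT r n v ->
  ~~ ball predT r n (src e) || ~~ ball predT r n (tgt e) ->
  connect (adj (predC1 e)) v r.
Proof.
elim: n v => [|n IH] v /=; first by move=> /eqP -> _.
move=> hv hout.
have hout' : ~~ ball predT r n (src e) || ~~ ball predT r n (tgt e).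
  case/orP: hout => /negP h; apply/orP; [left|right]; apply/negP => h';
     by apply: h; rewrite h'.
case/orP: hv => [hv|/existsP[w /andP[avw hw]]]; first exact: IH.
have /adjP[f _ hf] := avw.
have fe : f != e.
  apply/eqP => fe; subst f; move: hout.
  have hvv := ball_adj avw hw; have hww := ballS hw.
  by case: hf => -[-> ->]; move: hvv hww => /= -> ->.
apply: connect_trans (IH w hw hout'); apply/connect1/adjP; by exists f.
Qed.

Section Counting.
Variables (A : pred E) (r : V).
Hypothesis connA : forall v, connect (adj A) v r.

Definition dist v : nat := ex_minn (connect_ball (connA v)).

Lemma distP v : ball A r (dist v) v /\ forall n, ball A r n v -> dist v <= n.
Proof. by rewrite /dist; case: ex_minnP. Qed.

Definition parent_edge (v : V) (e : E) : bool :=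
  A e && (((src e == v) && (dist (tgt e) < dist v)) ||
          ((tgt e == v) && (dist (src e) < dist v))).

Lemma parent_edge_exists v : v != r -> exists e, parent_edge v e.
Proof.
move=> vr; have [h1 h2] := distP v; rewrite /parent_edge; move: h1 h2.
case: (dist v) => [|m] /=; first by rewrite (negbTE vr).
case/orP=> [hm|/existsP[w /andP[avw hw]]] hmin.
  by have := hmin _ hm; rewrite ltnn.
have dw : dist w < m.+1 by rewrite ltnS; apply: (proj2 (distP w)).
have /adjP[f Af hf] := avw; exists f; rewrite Af /=.
by case: hf => -[-> ->]; rewrite eqxx dw ?orbT.
Qed.

Lemma parent_edge_inj v v' e : parent_edge v e -> parent_edge v' e -> v = v'.
Proof.
move=> /andP[_ H1] /andP[_ H2].
case/orP: H1 => /andP[/eqP s1 l1]; case/orP: H2 => /andP[/eqP s2 l2];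
  rewrite -s1 -s2 // in l1 l2 *; by have := ltn_trans l1 l2; rewrite ltnn.
Qed.

Lemma card_connected : #|V| <= #|A| + 1.
Proof.
pose g v := [pick e | parent_edge v e].
have gS v : v != r -> exists2 e, g v = Some e & parent_edge v e.
  move=> vr; rewrite /g; case: pickP => [e he|hn]; first by exists e.
  by have [e he] := parent_edge_exists vr; rewrite hn in he.
have ginj : {in [set~ r] &, injective g}.
  move=> v v'; rewrite !in_setC1 => vr vr'.
  have [e -> he] := gS v vr; have [e' -> he'] := gS v' vr'.
  by case=> ee; subst e'; apply: parent_edge_inj he he'.
have sub : g @: [set~ r] \subset Some @: [set e | A e].
  apply/subsetP => _ /imsetP[v vr ->]; rewrite in_setC1 in vr.
  have [e -> /andP[Ae _]] := gS v vr; by rewrite imset_f ?inE.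
have := subset_leq_card sub.
rewrite card_in_imset // card_imset; last exact: Some_inj.
rewrite cardsC1 cardsE.
have : 0 < #|V| by apply/card_gt0P; exists r.
by case: #|V| => // n _; rewrite addn1.
Qed.

End Counting.

Lemma tree_bridge : is_tree src tgt ->
  forall e, ~~ connect (adj (predC1 e)) (src e) (tgt e).
Proof.
move=> [conn card] e; apply/negP => h.
have sy := adj_sym (predC1 e).
have all v : connect (adj (predC1 e)) v (src e).
  apply: (connect_sub _ (conn v (src e))) => x y /adjP[f _ hf].
  have [fe|fe] := eqVneq f e; last by apply/connect1/adjP; exists f.
  by subst f; case: hf => -[<- <-]; last rewrite (sym_connect_sym sy).
have := card_connected all; rewrite cardC1 -card addn1.
have : 0 < #|E| by apply/card_gt0P; exists e.
by case: #|E| => // n _; rewrite ltnn.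
Qed.

Lemma tree_ind (vs : V) (Pr : V -> Prop) : is_tree src tgt -> Pr vs ->
  (forall v w e, v != vs -> joins e v w ->
     ~~ connect (adj (predC1 e)) v vs -> Pr w -> Pr v) ->
  forall v, Pr v.
Proof.
move=> tr P0 Pstep v.
have [n hn] := connect_ball (proj1 tr v vs).
elim: n v hn => [|n IH] v /=; first by move/eqP ->.
have [hv|hv] := boolP (ball predT vs n v); first by move=> _; exact: IH.
case/orP=> [//|/existsP[w /andP[avw hw]]].
have [->|vvs] := eqVneq v vs; first by [].
have /adjP[f _ hf] := avw.
apply: (Pstep v w f) => //; last exact: IH.
apply/negP => c.
have sy := adj_sym (predC1 f).
have cwv : connect (adj (predC1 f)) w v.
  apply: connect_trans (ball_avoid hw _) _; last by rewrite (sym_connect_sym sy).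
  by case: hf => -[-> ->]; rewrite hv ?orbT.
have := tree_bridge tr f.
by case: hf => -[-> ->]; rewrite ?cwv // (sym_connect_sym sy) cwv.
Qed.

End TreeInduction.

Local Open Scope group_scope.

Section RepEquiv.
Variable gT : finGroupType.
Implicit Types (P Q R T : {set gT}) (K : fusion_pred gT) (f g a b c : gT -> gT).

Lemma hom1 P f : group_set P -> {in P &, {morph f : u v / u * v}} -> f 1 = 1.
Proof.
move=> /group_setP[P1 _] fM; have := fM 1 1 P1 P1; rewrite mulg1.
by move/(congr1 (fun x => (f 1)^-1 * x)); rewrite mulVg mulKg.
Qed.

Lemma img_group P f : group_set P -> {in P &, {morph f : u v / u * v}} ->
  group_set (f @: P).
Proof.
move=> gP fM; have /group_setP[P1 PM] := gP; apply/group_setP; split.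
  by apply/imsetP; exists 1 => //; rewrite (hom1 gP fM).
move=> _ _ /imsetP[u Pu ->] /imsetP[v Pv ->].
by rewrite -fM //; apply/imset_f/PM.
Qed.

Lemma ghom_id P R : P \subset R -> grp_hom P R id.
Proof. by move=> sPR; split; rewrite ?imset_id. Qed.

Lemma ghom_sub P R R' f : grp_hom P R f -> R \subset R' -> grp_hom P R' f.
Proof. by move=> [fM sf] sR; split => //; apply: subset_trans sR. Qed.

Lemma ghom_img P R f : grp_hom P R f -> grp_hom P (f @: P) f.
Proof. by move=> [fM _]; split. Qed.

Lemma ghom_comp P Q R a f : grp_hom P Q a -> grp_hom Q R f ->
  grp_hom P R (fun u => f (a u)).
Proof.
move=> [aM aS] [fM fS].
have aQ u : u \in P -> a u \in Q by move=> Pu; apply/(subsetP aS)/imset_f.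
split; first by move=> u v Pu Pv /=; rewrite aM // fM // aQ.
by rewrite (imset_comp f a); apply: subset_trans fS; apply: imsetS.
Qed.

Lemma ghom_ext P R f g : group_set P -> grp_hom P R f -> {in P, f =1 g} ->
  grp_hom P R g.
Proof.
move=> /group_setP[_ PM] [fM fS] e; split; last by rewrite -(eq_in_imset e).
by move=> u v Pu Pv; rewrite -!e ?PM // fM.
Qed.

Lemma re_mono K K' T T' P a b : (forall Q f, K Q f -> K' Q f) ->
  T \subset T' -> rep_equiv K T P a b -> rep_equiv K' T' P a b.
Proof.
move=> KK sT [ha [hb [c [Kc cE]]]].
split; first exact: ghom_sub ha sT.
split; first exact: ghom_sub hb sT.
by exists c; split; first exact: KK.
Qed.

(* Maps agreeing on [P] are equivalent: witnessed by the identity of K. *)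
Lemma re_ext K (T : {group gT}) P a b : is_fusion T K -> group_set P ->
  grp_hom P T a -> {in P, a =1 b} -> rep_equiv K T P a b.
Proof.
move=> fK gP ha e; split => //; split; first exact: ghom_ext ha e.
have [aM aS] := ha.
exists id; rewrite imset_id; split; last by split; [apply: eq_in_imset|].
apply: (fus_ext fK (fus_conj fK (img_group gP aM) aS (group1 T))).
by move=> u _; rewrite conjg1.
Qed.

(* [~] is symmetric: invert the witnessing isomorphism inside [K]. *)
Lemma re_sym K T P a b : is_fusion T K ->
  rep_equiv K T P a b -> rep_equiv K T P b a.
Proof.
move=> fK [ha [hb [c [Kc [ic vc]]]]]; split => //; split => //.
have [g [Kg gK]] := fus_inv fK Kc.
exists g; rewrite ic in Kg; split => //; split.
  by rewrite -ic -imset_comp (eq_in_imset (g := id)) ?imset_id // => u Pu /= ;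
     rewrite gK ?imset_f.
by move=> u Pu; rewrite -vc // gK // imset_f.
Qed.

(* [~] is transitive: compose the witnessing isomorphisms inside [K]. *)
Lemma re_trans K T P a b d : is_fusion T K ->
  rep_equiv K T P a b -> rep_equiv K T P b d -> rep_equiv K T P a d.
Proof.
move=> fK [ha [hb [c [Kc [ic vc]]]]] [_ [hd [c' [Kc' [ic' vc']]]]].
split => //; split => //; exists (fun u => c' (c u)); split.
  by apply: (fus_comp fK Kc); rewrite ic.
split; first by rewrite (imset_comp c' c) ic ic'.
by move=> u Pu; rewrite vc // vc'.
Qed.

Lemma re_pre K T Q R a x y : is_fusion T K -> group_set R ->
  grp_hom R Q a -> rep_equiv K T Q x y ->
  rep_equiv K T R (fun r => x (a r)) (fun r => y (a r)).
Proof.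
move=> fK gR ha [hx [hy [c [Kc [ic vc]]]]].
have [aM aS] := ha.
have aQ u : u \in R -> a u \in Q by move=> Pu; apply/(subsetP aS)/imset_f.
have hxa := ghom_comp ha hx.
split => //; split; first exact: ghom_comp ha hy.
exists c; split.
  apply: (fus_res fK Kc); first exact: img_group gR (proj1 hxa).
  by rewrite (imset_comp x a); apply: imsetS.
split; last by move=> u Ru; rewrite vc ?aQ.
by rewrite -imset_comp; apply: eq_in_imset => u Ru; rewrite /comp vc ?aQ.
Qed.

Definition pinv P f (v : gT) := odflt v [pick u in P | f u == v].

Lemma pinvK P f : {in P &, injective f} -> {in P, forall u, pinv P f (f u) = u}.
Proof.
move=> inj u Pu; rewrite /pinv; case: pickP => [w /andP[Pw /eqP e]|h] /=.
  by apply: inj.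
by have := h u; rewrite Pu eqxx.
Qed.

Lemma pinv_hom P f : group_set P -> {in P &, {morph f : u v / u * v}} ->
  {in P &, injective f} -> grp_hom (f @: P) P (pinv P f).
Proof.
move=> /group_setP[_ PM] fM inj; split.
  move=> _ _ /imsetP[u Pu ->] /imsetP[v Pv ->].
  by rewrite -fM // !pinvK // PM.
rewrite -imset_comp (eq_in_imset (g := id)) ?imset_id //.
by move=> u Pu /=; rewrite pinvK.
Qed.

End RepEquiv.

Section OrbitGraph.
Variables (gT : finGroupType) (V E : finType) (p : nat) (T : fus_tree gT V E).
Hypothesis HT : is_fusion_tree T p.
Hypothesis HH : hypH T.

Local Notation src := (ft_src T).
Local Notation tgt := (ft_tgt T).
Local Notation vstar := (ft_vstar T).
Local Notation Sv := (ft_Sv T).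
Local Notation Se := (ft_Se T).
Local Notation Fv := (ft_Fv T).
Local Notation Fe := (ft_Fe T).
Local Notation S := (ft_S T).
Local Notation conn := (orbit_conn T).

Lemma Sv_sub v : Sv v \subset S.
Proof. by case: HT => _ _ [h _] _ _; apply: h. Qed.

Lemma Se_sub e v w : joins src tgt e v w -> Se e \subset Sv v /\ Se e \subset Sv w.
Proof. by case: HT => _ _ [_ /(_ e)[sSe_src sSe_tgt]] _ _; case=> -[<- <-]. Qed.

Lemma Fv_fus v : is_fusion (Sv v) (Fv v).
Proof. by case: HT => _ _ _ [h _] _; apply: h. Qed.

Lemma Fe_fus e : is_fusion (Se e) (Fe e).
Proof. by case: HT => _ _ _ [_ h] _; apply: h. Qed.

Lemma Fe_Fv e Q f : Fe e Q f -> Fv (src e) Q f.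
Proof. by case: HT => _ _ _ _ h /h[]. Qed.

Lemma conn_same Q v a b : rep_equiv (Fv v) (Sv v) Q a b -> conn Q (v, a) (v, b).
Proof. by move=> h; apply: rst_step; left. Qed.

Lemma conn_edge Q e c v w a b : grp_hom Q (Se e) c -> joins src tgt e v w ->
  rep_equiv (Fv v) (Sv v) Q c a -> rep_equiv (Fv w) (Sv w) Q c b ->
  conn Q (v, a) (w, b).
Proof. by move=> hc hj h1 h2; apply: rst_step; right; exists e, c. Qed.

(* The inclusion of [Q] in the root group is joined, in Rep(Q, F), to its
   inclusion in [S(v)] for every vertex [v] with [Q <= S(v)]; this is where
   hypothesis (H) is used, by induction along the tree towards [v_*]. *)
Lemma conn_root v Q : group_set Q -> Q \subset Sv v -> conn Q (vstar, id) (v, id).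
Proof.
move: v Q; apply: (@tree_ind V E src tgt vstar (fun v => forall Q, group_set Q ->
   Q \subset Sv v -> conn Q (vstar, id) (v, id))) => [||v w e nv hj nc IH Q gQ sQ].
- by case: HT.
- by move=> Q _ _; apply: rst_refl.
have ev : (src e == v) || (tgt e == v) by case: hj => -[-> ->]; rewrite eqxx ?orbT.
have sQe : Q \subset Se e by rewrite (HH nv ev nc).
have [sev sew] := Se_sub hj.
have re_id u : Q \subset Sv u -> rep_equiv (Fv u) (Sv u) Q id id.
  by move=> sQu; apply: re_ext (Fv_fus u) gQ (ghom_id sQu) _.
have sQw : Q \subset Sv w := subset_trans sQe sew.
apply: rst_trans (IH Q gQ sQw) (rst_sym _ _ _ _ _).
by apply: conn_edge (ghom_id sQe) hj _ _; apply: re_id.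
Qed.

Lemma conn_precomp Q R a x y : group_set R -> grp_hom R Q a -> conn Q x y ->
  conn R (x.1, fun r => x.2 (a r)) (y.1, fun r => y.2 (a r)).
Proof.
move=> gR ha; elim=> {x y} [x y st| x | x y _ IH | x y z _ IH1 _ IH2].
- apply: rst_step; case: st => [[e1 re]|[e [c [hc [hend [re1 re2]]]]]].
    by left; split => //; apply: re_pre (Fv_fus _) gR ha re.
  right; exists e, (fun r => c (a r)); split; first exact: ghom_comp ha hc.
  by split => //; split; apply: re_pre (Fv_fus _) gR ha _.
- exact: rst_refl.
- exact: rst_sym.
- exact: rst_trans IH2.
Qed.

Definition inj_hom (Q : {set gT}) (f : gT -> gT) : Prop :=
  [/\ group_set Q, Q \subset S, {in Q &, {morph f : x y / x * y}},
      {in Q &, injective f} & f @: Q \subset S].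

(* It contains every F(v), hence contains the completion F_T. *)
Definition root_fusion : fusion_pred gT := fun Q f =>
  inj_hom Q f /\ conn Q (vstar, id) (vstar, f).

Lemma root_fusion_ext Q f g : root_fusion Q f -> {in Q, f =1 g} -> root_fusion Q g.
Proof.
move=> [[gQ sQ fM finj fS] c] e; have /group_setP[_ QM] := gQ.
split; last by apply: rst_trans c (conn_same (re_ext (Fv_fus _) gQ _ e)).
split => //; last by rewrite -(eq_in_imset e).
- by move=> u v Qu Qv; rewrite -!e ?QM // fM.
- by move=> u v Qu Qv; rewrite -!e // => /finj; apply.
Qed.

Lemma root_fusion_conj Q s : group_set Q -> Q \subset S -> s \in S ->
  root_fusion Q (fun x => x ^ s).
Proof.
move=> gQ sQ sS.
have sQs : (fun x => x ^ s) @: Q \subset S.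
  by apply/subsetP => _ /imsetP[u Qu ->]; rewrite groupJ // (subsetP sQ).
have cM : {in Q &, {morph (fun x => x ^ s) : u v / u * v}}.
  by move=> u v _ _; rewrite conjMg.
split; first by split => // u v _ _; apply: conjg_inj.
apply: conn_same; split; first exact: ghom_id.
split; first by split.
exists (fun x => x ^ s); rewrite imset_id; split => //.
exact: (fus_conj (Fv_fus vstar) gQ sQ sS).
Qed.

Lemma root_fusion_res Q R f : root_fusion Q f -> group_set R -> R \subset Q ->
  root_fusion R f.
Proof.
move=> [[gQ sQ fM finj fS] c] gR sRQ; split; last exact: conn_precomp gR (ghom_id sRQ) c.
split => //; first exact: subset_trans sQ.
- by move=> u v Ru Rv; apply: fM; apply: (subsetP sRQ).
- by move=> u v Ru Rv; apply: finj; apply: (subsetP sRQ).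
- by apply: subset_trans fS; apply: imsetS.
Qed.

Lemma root_fusion_comp Q f g : root_fusion Q f -> root_fusion (f @: Q) g ->
  root_fusion Q (fun x => g (f x)).
Proof.
move=> [[gQ sQ fM finj fS] c] [[_ _ gM ginj gS] c'].
have fQ u : u \in Q -> f u \in f @: Q by move=> Qu; apply: imset_f.
split; last exact: rst_trans c (conn_precomp gQ (ghom_img (conj fM fS)) c').
split => //; last by rewrite (imset_comp g f).
- by move=> u v Qu Qv /=; rewrite fM // gM ?fQ.
- by move=> u v Qu Qv /= /ginj h; apply: finj => //; apply: h; rewrite fQ.
Qed.

Lemma root_fusion_inv Q f : root_fusion Q f ->
  exists g, root_fusion (f @: Q) g /\ {in Q, forall x, g (f x) = x}.
Proof.
move=> [[gQ sQ fM finj fS] c].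
have hp := pinv_hom gQ fM finj; have [pM pS] := hp.
have gfQ := img_group gQ fM.
exists (pinv Q f); split; last exact: pinvK.
split.
  split => //; last exact: subset_trans pS sQ.
  by move=> _ _ /imsetP[u Qu ->] /imsetP[v Qv ->]; rewrite !pinvK // => ->.
apply: rst_trans (rst_sym _ _ _ _ (conn_precomp gfQ hp c)) => /=.
apply: conn_same; apply: re_ext (Fv_fus _) gfQ (ghom_id fS) _.
by move=> _ /imsetP[u Qu ->]; rewrite pinvK.
Qed.

Lemma root_fusion_is_fusion : is_fusion S root_fusion.
Proof.
split.
- by move=> Q f [].
- exact: root_fusion_ext.
- exact: root_fusion_conj.
- exact: root_fusion_res.
- exact: root_fusion_comp.
- exact: root_fusion_inv.
Qed.

Lemma Fv_root_fusion v Q g : Fv v Q g -> root_fusion Q g.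
Proof.
move=> Fg; have [gQ sQ gM ginj gS] := fus_mor (Fv_fus v) Fg.
have sS := Sv_sub v.
split; first by split => //; apply: subset_trans sS.
have id_g : rep_equiv (Fv v) (Sv v) Q id g.
  by split; first exact: ghom_id; split; [split|exists g; rewrite imset_id].
have g_root : conn Q (vstar, g) (v, g).
  exact: (conn_precomp gQ (ghom_img (conj gM gS)) (conn_root (img_group gQ gM) gS)).
apply: rst_trans (conn_root gQ sQ) _; apply: rst_trans (conn_same id_g) _.
exact: rst_sym g_root.
Qed.

Lemma completion_root_fusion Q f : completion T Q f -> root_fusion Q f.
Proof. by move=> h; apply: h root_fusion_is_fusion Fv_root_fusion. Qed.

Lemma Fv_completion v Q g : Fv v Q g -> completion T Q g.
Proof. by move=> h G _ sub; apply: sub h. Qed.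

(* F_T is itself a fusion system on [S]; the bound [F_T <= root_fusion]
   supplies the injectivity needed for the inverse axiom. *)
Lemma completion_is_fusion : is_fusion S (completion T).
Proof.
split.
- by move=> Q f /completion_root_fusion[].
- by move=> Q f g h e G fG sub; apply: (fus_ext fG (h G fG sub) e).
- by move=> Q s gQ sQ sS G fG sub; apply: (fus_conj fG).
- by move=> Q R f h gR sRQ G fG sub; apply: (fus_res fG (h G fG sub)).
- by move=> Q f g h1 h2 G fG sub; apply: (fus_comp fG (h1 G fG sub) (h2 G fG sub)).
- move=> Q f h; have [[gQ sQ fM finj fS] _] := completion_root_fusion h.
  exists (pinv Q f); split; last exact: pinvK.
  move=> G fG sub; have [g [Gg gK]] := fus_inv fG (h G fG sub).
  apply: (fus_ext fG Gg) => _ /imsetP[u Qu ->].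
  by rewrite gK // pinvK.
Qed.

Lemma conn_vertex_root Q v a : group_set Q -> grp_hom Q (Sv v) a ->
  conn Q (vstar, a) (v, a).
Proof.
move=> gQ ha; have [aM aS] := ha.
exact: (conn_precomp gQ (ghom_img ha) (conn_root (img_group gQ aM) aS)).
Qed.

Section Components.
Variable P : {group gT}.
Local Notation RE := (rep_equiv (completion T) S P).

Lemma conn_RE x y : conn P x y -> x = y \/ RE x.2 y.2.
Proof.
have lift v a b : rep_equiv (Fv v) (Sv v) P a b -> RE a b.
  exact: re_mono (@Fv_completion v) (Sv_sub v).
elim=> {x y} [x y st| x | x y _ IH | x y z _ IH1 _ IH2].
- right; case: st => [[_ /lift //]|[e [c [_ [_ [/lift ca /lift cb]]]]]].
  exact: re_trans completion_is_fusion (re_sym completion_is_fusion ca) cb.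
- by left.
- by case: IH => [->|h]; [left|right; apply: re_sym completion_is_fusion h].
- case: IH1 => [->|h1] //; case: IH2 => [<-|h2]; first by right.
  by right; apply: re_trans completion_is_fusion h1 h2.
Qed.

(* Two vertices of Rep(P, F) lie in the same component iff their images in
   Hom(P, S) are F_T-equivalent: Phi_P is well defined and injective. *)
Lemma conn_iff_RE v w a b : grp_hom P (Sv v) a -> grp_hom P (Sv w) b ->
  conn P (v, a) (w, b) <-> RE a b.
Proof.
move=> ha hb; have gP := groupP P; split.
  case/conn_RE => [[_ <-]|//].
  exact: re_ext completion_is_fusion gP (ghom_sub ha (Sv_sub v)) _.
move=> [_ [_ [c [Kc [ic vc]]]]].
have [[_ _ cM _ cS] c_root] := completion_root_fusion Kc.
have a_ca : conn P (vstar, a) (vstar, fun r => c (a r)).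
  exact: (conn_precomp gP (ghom_img ha) c_root).
have ca_b : conn P (vstar, fun r => c (a r)) (vstar, b).
  apply: conn_same; apply: re_ext (Fv_fus _) gP _ vc.
  by apply: ghom_comp (ghom_img ha) _; split.
apply: rst_trans (rst_sym _ _ _ _ (conn_vertex_root gP ha)) _.
apply: rst_trans a_ca (rst_trans _ _ _ _ _ ca_b (conn_vertex_root gP hb)).
Qed.

Hypothesis PS : P \subset S.

Lemma RE_id_completion a : RE id a <-> completion T P a.
Proof.
split => [[_ [_ [c [Kc [_ vc]]]]]|h].
  by rewrite imset_id in Kc; apply: (fus_ext completion_is_fusion Kc vc).
have [_ _ aM _ aS] := fus_mor completion_is_fusion h.
split; first exact: ghom_id.
by split; [split|exists a; rewrite imset_id].
Qed.

(* Part (a) in a uniform form: for a fusion system [K] on [R <= S(v)] whose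
   morphisms lie in F_T (namely F(v) itself, or F(e) at an endpoint [v] of
   [e]), the vertex [[a]_K] is in the component of [[iota_P^S]] iff its
   class contains a morphism of F_T. *)
Lemma conn_root_iff (K : fusion_pred gT) (R : {group gT}) v a :
  is_fusion R K -> (forall Q f, K Q f -> completion T Q f) ->
  R \subset Sv v -> grp_hom P R a ->
  conn P (vstar, id) (v, a) <-> exists b, rep_equiv K R P b a /\ completion T P b.
Proof.
move=> fK KF sRv ha; have hav := ghom_sub ha sRv.
apply: iff_trans (conn_iff_RE (ghom_id PS) hav) _; split.
  move=> /RE_id_completion Fa; exists a; split => //.
  exact: re_ext fK (groupP P) ha _.
move=> [b [ba /RE_id_completion id_b]].
apply: re_trans completion_is_fusion id_b _.
exact: re_mono KF (subset_trans sRv (Sv_sub v)) ba.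
Qed.

End Components.

End OrbitGraph.

Theorem proposition2p5 (gT : finGroupType) (V E : finType) (p : nat)
    (T : fus_tree gT V E) (P : {group gT}) :
  is_fusion_tree T p -> hypH T -> P \subset ft_S T ->
  ((forall v a, grp_hom P (ft_Sv T v) a ->
      (orbit_conn T P (ft_vstar T, id) (v, a) <->
       exists b, rep_equiv (ft_Fv T v) (ft_Sv T v) P b a /\ completion T P b))
   /\ (forall e c, grp_hom P (ft_Se T e) c ->
      (orbit_conn T P (ft_vstar T, id) (ft_src T e, c) <->
       exists d, rep_equiv (ft_Fe T e) (ft_Se T e) P d c /\ completion T P d)))
  /\
  ((forall v w a b, grp_hom P (ft_Sv T v) a -> grp_hom P (ft_Sv T w) b ->
      (orbit_conn T P (v, a) (w, b) <->
       rep_equiv (completion T) (ft_S T) P a b))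
   /\ (forall b, grp_hom P (ft_S T) b ->
      exists v a, grp_hom P (ft_Sv T v) a /\
                  rep_equiv (completion T) (ft_S T) P a b)).
Proof.
move=> HT HH PS; split; split.
- move=> v a ha.
  exact (conn_root_iff HT HH PS (Fv_fus HT v) (@Fv_completion _ _ _ T v) (subxx _) ha).
- move=> e c hc.
  have Fe_comp Q f : ft_Fe T e Q f -> completion T Q f.
    by move/(Fe_Fv HT)/Fv_completion.
  have [sSe _] := Se_sub HT (joins_ends _ _ e).
  exact (conn_root_iff HT HH PS (Fe_fus HT e) Fe_comp sSe hc).
- move=> v w a b ha hb; exact (conn_iff_RE HT HH ha hb).
- move=> b hb; exists (ft_vstar T), b; split => //.
  exact: re_ext (completion_is_fusion HT HH) (groupP P) hb _.
Qed.
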